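(* Let $X$ be a real reflexive Banach space, let $T:X\rightrightarrows X^{\ast}$ be maximally monotone, and let $h\in\mathcal{H}(T)$. Then $\breve{T}_h=L^{\mathcal{A}h}$, and $\breve{T}_h\in\mathbb{E}(T)$.
   Context: $X^{\ast}$ is the dual of $X$ with pairing $\langle\cdot,\cdot\rangle$; $\mathbb{R}_+=[0,\infty)$. The dual of $X\times X^{\ast}$ is identified with $X^{\ast}\times X$ via $\langle (x,x^{\ast}),(y^{\ast},y)\rangle=\langle x,y^{\ast}\rangle+\langle y,x^{\ast}\rangle$; for $g:X\times X^{\ast}\to\mathbb{R}\cup\{+\infty\}$, $g^{\ast}(y^{\ast},y)=\sup_{(x,x^{\ast})}\{\langle x,y^{\ast}\rangle+\langle y,x^{\ast}\rangle-g(x,x^{\ast})\}$, and $i(x,x^{\ast})=(x^{\ast},x)$. $\mathcal{H}(T)$ is the family of lower semicontinuous convex $h:X\times X^{\ast}\to\mathbb{R}\cup\{+\infty\}$ with $h(x,x^{\ast})\ge\langle x,x^{\ast}\rangle$ everywhere and equality whenever $x^{\ast}\in T(x)$. $\mathcal{A}h:=\tfrac12(h+h^{\ast}\circ i)$. For $\eta\ge0$ and $z=(x,x^{\ast})$ with $h(z)<\infty$, the $\eta$-subdifferential is $\partial_\eta h(z)=\{(y^{\ast},y)\in X^{\ast}\times X: h(w,w^{\ast})\ge h(z)+\langle w-x,y^{\ast}\rangle+\langle y,w^{\ast}-x^{\ast}\rangle-\eta\ \forall (w,w^{\ast})\}$, and $\partial_\eta h(z)=\emptyset$ if $h(z)=+\infty$.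 Define $\breve{T}_h:\mathbb{R}_+\times X\rightrightarrows X^{\ast}$ by $\breve{T}_h(\epsilon,x)=\{x^{\ast}:(x^{\ast},x)\in\partial_{2\epsilon}h(x,x^{\ast})\}$. For $g\in\mathcal{H}(T)$, $L^{g}(\epsilon,x):=\{x^{\ast}: g(x,x^{\ast})\le\langle x,x^{\ast}\rangle+\epsilon\}$. $\mathbb{E}(T)$ is the family of $E:\mathbb{R}_+\times X\rightrightarrows X^{\ast}$ such that: $(E_1)$ $T(x)\subset E(\epsilon,x)$ for all $\epsilon\ge0$, $x$; $(E_2)$ $E(\epsilon_1,x)\subset E(\epsilon_2,x)$ whenever $0\le\epsilon_1\le\epsilon_2$; $(E_3)$ if $x_1^{\ast}\in E(\epsilon_1,x_1)$, $x_2^{\ast}\in E(\epsilon_2,x_2)$, $\alpha\in[0,1]$, $\hat x=\alpha x_1+(1-\alpha)x_2$, $\hat x^{\ast}=\alpha x_1^{\ast}+(1-\alpha)x_2^{\ast}$, and $\epsilon=\alpha\epsilon_1+(1-\alpha)\epsilon_2+\alpha(1-\alpha)\langle x_1-x_2,x_1^{\ast}-x_2^{\ast}\rangle$, then $\epsilon\ge0$ and $\hat x^{\ast}\in E(\epsilon,\hat x)$. *)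

From HB Require Import structures.
From mathcomp Require Import all_boot all_order all_algebra.
From mathcomp Require Import all_classical all_reals all_analysis.
Set Implicit Arguments. Unset Strict Implicit. Unset Printing Implicit Defensive.
Import Order.TTheory GRing.Theory Num.Theory.
Import numFieldNormedType.Exports.
Local Open Scope classical_set_scope.
Local Open Scope ring_scope.

Section Duality.
Variables (R : realType) (X : normedModType R).

(* Elements of the topological dual X^* are represented as functions X -> R
   satisfying [is_dual]: linear and continuous. *)
Definition is_dual (f : X -> R) : Prop :=
  (forall (a : R) (u v : X), f (a *: u + v) = a * f u + f v) /\ continuous f.

Definition dnorm (f : X -> R) : R := sup [set `|f x| | x in [set x : X | `|x| <= 1]].

Definition dsub (f g : X -> R) : X -> R := fun z => f z - g z.

(* X is reflexive: the canonical embedding X -> X^** is onto, i.e. every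
   linear functional on X^* continuous for the dual norm is an evaluation. *)
Definition reflexive_space : Prop :=
  forall phi : (X -> R) -> R,
    (forall (a : R) f g, is_dual f -> is_dual g ->
       phi (fun z => a * f z + g z) = a * phi f + phi g) ->
    (forall f, is_dual f -> forall e : R, 0 < e -> exists2 d : R, 0 < d &
       forall g, is_dual g -> dnorm (dsub g f) < d -> `|phi g - phi f| < e) ->
    exists x : X, forall f, is_dual f -> phi f = f x.

Definition monotone_op (T : X -> set (X -> R)) : Prop :=
  forall x y xs ys, T x xs -> T y ys -> 0 <= (xs (x - y) - ys (x - y)).

Definition maximal_monotone (T : X -> set (X -> R)) : Prop :=
  (forall x, T x `<=` is_dual) /\ monotone_op T /\
  forall S : X -> set (X -> R), (forall x, S x `<=` is_dual) -> monotone_op S ->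
    (forall x, T x `<=` S x) -> S = T.

Local Open Scope ereal_scope.

(* functions X × X^* -> R ∪ {+oo}, only relevant on pairs (x, x^* ) with x^* dual *)
Definition lsc_XXs (g : X -> (X -> R) -> \bar R) : Prop :=
  forall (x : X) xs, is_dual xs -> forall a : R, a%:E < g x xs ->
    exists2 d : R, (0 < d)%R & forall (y : X) ys, is_dual ys ->
      (`|y - x| < d)%R -> (dnorm (dsub ys xs) < d)%R -> a%:E < g y ys.

Definition convex_XXs (g : X -> (X -> R) -> \bar R) : Prop :=
  forall (x : X) xs (y : X) ys (l : R), is_dual xs -> is_dual ys -> (0 < l < 1)%R ->
    g (l *: x + (1 - l) *: y)%R (fun z => l * xs z + (1 - l) * ys z)%R
      <= l%:E * g x xs + (1 - l)%:E * g y ys.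

Definition calH (T : X -> set (X -> R)) (h : X -> (X -> R) -> \bar R) : Prop :=
  lsc_XXs h /\ convex_XXs h /\
  (forall x xs, is_dual xs -> (xs x)%:E <= h x xs) /\
  (forall x xs, T x xs -> h x xs = (xs x)%:E).

(* h^* ∘ i : (x, x^* ) |-> h^*(x^*, x)
   = sup_{(w,w^* )} <w, x^*> + <x, w^*> - h(w, w^* ) *)
Definition conj_i (h : X -> (X -> R) -> \bar R) (x : X) (xs : X -> R) : \bar R :=
  ereal_sup [set (xs w + ws x)%:E - h w ws | w in setT & ws in is_dual].

Definition calA (h : X -> (X -> R) -> \bar R) (x : X) (xs : X -> R) : \bar R :=
  (h x xs + conj_i h x xs) * (2^-1)%:E.

(* eta-subdifferential of h at (x, x^* ), elements (y^*, y) *)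
Definition esubdiff (h : X -> (X -> R) -> \bar R) (eta : R) (x : X) (xs : X -> R)
  : set ((X -> R) * X) :=
  [set p | is_dual p.1 /\ h x xs < +oo /\
     forall w ws, is_dual ws ->
       h x xs + (p.1 (w - x) + (ws p.2 - xs p.2) - eta)%R%:E <= h w ws].

Definition Tbreve (h : X -> (X -> R) -> \bar R) (eps : R) (x : X) : set (X -> R) :=
  [set xs | is_dual xs /\ esubdiff h (2 * eps) x xs (xs, x)].

Definition Lg (g : X -> (X -> R) -> \bar R) (eps : R) (x : X) : set (X -> R) :=
  [set xs | is_dual xs /\ g x xs <= (xs x + eps)%:E].

Local Close Scope ereal_scope.

Definition calE (T : X -> set (X -> R)) (E : R -> X -> set (X -> R)) : Prop :=
  (forall eps x, 0 <= eps -> T x `<=` E eps x) /\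
  (forall e1 e2 x, 0 <= e1 -> e1 <= e2 -> E e1 x `<=` E e2 x) /\
  (forall e1 e2 x1 x2 x1s x2s (a : R), 0 <= e1 -> 0 <= e2 ->
     E e1 x1 x1s -> E e2 x2 x2s -> 0 <= a <= 1 ->
     let eps := a * e1 + (1 - a) * e2 + a * (1 - a) * (x1s (x1 - x2) - x2s (x1 - x2)) in
     0 <= eps /\
     E eps (a *: x1 + (1 - a) *: x2) (fun z => a * x1s z + (1 - a) * x2s z)).

End Duality.

From mathcomp Require Import all_boot all_order all_algebra.
From mathcomp Require Import all_classical all_reals all_analysis.
From mathcomp Require Import ring lra.
Set Implicit Arguments. Unset Strict Implicit. Unset Printing Implicit Defensive.
Import Order.TTheory GRing.Theory Num.Theory.
Import numFieldNormedType.Exports.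
Local Open Scope classical_set_scope.
Local Open Scope ring_scope.

(* Since h dominates the duality pairing, both T_h(e, x) and L^{Ah}(e, x)
   unfold to the same real inequality: h(x, x^* ) = r is finite and
   <w, x^*> + <x, w^*> - h(w, w^* ) <= 2 <x, x^*> - r + 2e for every (w, w^* ).
   For L^{Ah} this is because the supremum of the left-hand side is
   h^*(x^*, x), which is never -oo since the graph of T, on which h is
   finite, is nonempty by maximality.  The properties of E(T) are read off
   this inequality: at a point of the graph of T, h touches the pairing, and
   convexity of h along segments ending there gives the case e = 0; the
   convex-combination property is the average of the two inequalities, using
   convexity of h at the combined point. *)

Section DualFunctionals.
Variables (R : realType) (X : normedModType R).
Implicit Types (f g : X -> R) (u v : X) (a b : R).

Lemma dual0 f : is_dual f -> f 0 = 0.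
Proof. by case=> lin _; have := lin 1 0 0; rewrite scaler0 addr0 mul1r; lra. Qed.

Lemma dualD f u v : is_dual f -> f (u + v) = f u + f v.
Proof. by case=> lin _; have := lin 1 u v; rewrite scale1r mul1r. Qed.

Lemma dualZ f a u : is_dual f -> f (a *: u) = a * f u.
Proof.
by move=> df; have := df.1 a u 0; rewrite !addr0 (dual0 df) addr0.
Qed.

Lemma dualB f u v : is_dual f -> f (u - v) = f u - f v.
Proof. by move=> df; rewrite dualD // -scaleN1r dualZ // mulN1r. Qed.

Lemma dual_comb f a b u v :
  is_dual f -> f (a *: u + b *: v) = a * f u + b * f v.
Proof. by move=> df; rewrite dualD // !dualZ. Qed.

Lemma is_dual_comb f g a b :
  is_dual f -> is_dual g -> is_dual (fun z => a * f z + b * g z).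
Proof.
move=> df dg; split=> [c u v|z].
  by rewrite !dualD // !dualZ //; ring.
by apply: cvgD; apply: cvgMl_tmp; [exact: df.2 | exact: dg.2].
Qed.

End DualFunctionals.

Lemma le0_of_weighted_le {R : realType} (D K : R) :
  0 <= K -> (forall l : R, 0 < l < 1 -> (1 - l) * D <= l * K) -> D <= 0.
Proof.
move=> K0 H; rewrite leNgt; apply/negP => D0.
set l := D / (2 * (D + K)).
have def_l : l * (2 * (D + K)) = D by rewrite /l divfK // gt_eqF //; lra.
have l0 : 0 < l by nra.
have l1 : l < 1 by nra.
by have := H l; rewrite l0 l1 => /(_ isT); nra.
Qed.

Section SelfSubgradient.
Variables (R : realType) (X : normedModType R) (h : X -> (X -> R) -> \bar R).
Hypothesis h_ge_pairing : forall w ws, is_dual ws -> ((ws w)%:E <= h w ws)%E.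

Definition self_subgrad (e : R) (x : X) (xs : X -> R) : Prop :=
  is_dual xs /\ exists r : R, h x xs = r%:E /\
    forall w ws (s : R), is_dual ws -> h w ws = s%:E ->
      xs w + ws x - s <= 2 * xs x - r + 2 * e.

Local Open Scope ereal_scope.

Lemma Tbreve_self_subgrad e x xs : Tbreve h e x xs <-> self_subgrad e x xs.
Proof.
split.
  case=> dxs [_ [hx_lt sub]]; split=> //.
  have := h_ge_pairing x dxs; move: hx_lt sub.
  case: (h x xs) => [r| |] //= _ sub _; exists r; split=> // w ws s dws hw.
  by have := sub w ws dws; rewrite hw -EFinD lee_fin (dualB w x dxs); lra.
case=> dxs [r [hx ineq]]; split=> //; split=> //=.
split; first by rewrite hx ltry.
move=> w ws dws; rewrite hx.
have := h_ge_pairing w dws.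
case hw: (h w ws) => [s| |] //= _; last by rewrite leey.
by rewrite -EFinD lee_fin (dualB w x dxs); have := ineq w ws s dws hw; lra.
Qed.

Lemma conj_i_ge x xs w ws (s : R) :
  is_dual ws -> h w ws = s%:E -> (xs w + ws x - s)%:E <= conj_i h x xs.
Proof.
by move=> dws hw; apply: ereal_sup_ubound; exists w => //; exists ws => //;
  rewrite hw EFinB.
Qed.

Lemma conj_i_le x xs (c : R) :
  conj_i h x xs <= c%:E <->
  forall w ws (s : R), is_dual ws -> h w ws = s%:E -> (xs w + ws x - s <= c)%R.
Proof.
split=> [le_c w ws s dws hw|ineq].
  by rewrite -lee_fin; apply: le_trans le_c; exact: conj_i_ge.
apply: ge_ereal_sup => _ [w _ [ws dws <-]].
have := h_ge_pairing w dws.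
case hw: (h w ws) => [s| |] //= _; last by rewrite addeNy leNye.
by rewrite -EFinB lee_fin; exact: ineq.
Qed.

Lemma calA_le x xs (r c : R) :
  h x xs = r%:E -> conj_i h x xs > -oo ->
  calA h x xs <= c%:E <-> conj_i h x xs <= (2 * c - r)%:E.
Proof.
rewrite /calA => -> ; case: (conj_i h x xs) => [d| |] //= _.
  by rewrite -EFinD -EFinM !lee_fin; split; lra.
by rewrite addey // mulyr gtr0_sg ?invr_gt0 // mul1e !leye_eq.
Qed.

Lemma Lg_calA_self_subgrad e x xs x0 xs0 (r0 : R) :
  is_dual xs0 -> h x0 xs0 = r0%:E ->
  Lg (calA h) e x xs <-> self_subgrad e x xs.
Proof.
move=> dxs0 hx0.
have conj_gt : conj_i h x xs > -oo.
  by apply: lt_le_trans (conj_i_ge x xs dxs0 hx0); rewrite ltNyr.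
split.
  case=> dxs; have := h_ge_pairing x dxs.
  case hx: (h x xs) => [r| |] //= _.
    move=> /(calA_le _ hx conj_gt)/conj_i_le ineq; split=> //; exists r.
    by split=> // w ws s dws hw; have := ineq w ws s dws hw; lra.
  rewrite /calA hx; move: conj_gt; case: (conj_i h x xs) => [d| |] //= _;
    by rewrite addye // mulyr gtr0_sg ?invr_gt0 // mul1e leye_eq.
case=> dxs [r [hx ineq]]; split=> //.
apply/(calA_le _ hx conj_gt)/conj_i_le => w ws s dws hw.
by have := ineq w ws s dws hw; lra.
Qed.

Local Close Scope ereal_scope.

Lemma self_subgrad_ge0 e x xs : self_subgrad e x xs -> 0 <= e.
Proof. by case=> dxs [r [hx ineq]]; have := ineq x xs r dxs hx; lra. Qed.

Lemma self_subgrad_le e1 e2 x xs :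
  e1 <= e2 -> self_subgrad e1 x xs -> self_subgrad e2 x xs.
Proof.
move=> le_e [dxs [r [hx ineq]]]; split=> //; exists r; split=> // w ws s dws hw.
by have := ineq w ws s dws hw; lra.
Qed.

Hypothesis h_convex : convex_XXs h.

Lemma convex_XXs_le_comb x1 x1s x2 x2s (r1 r2 a : R) :
  is_dual x1s -> is_dual x2s -> h x1 x1s = r1%:E -> h x2 x2s = r2%:E ->
  0 <= a <= 1 ->
  (h (a *: x1 + (1 - a) *: x2)%R (fun z => a * x1s z + (1 - a) * x2s z)%R
    <= (a * r1 + (1 - a) * r2)%:E)%E.
Proof.
move=> dx1s dx2s hx1 hx2 /andP [a0 a1].
have [->|a_neq0] := eqVneq a 0.
  under eq_fun do rewrite mul0r add0r subr0 mul1r.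
  by rewrite scale0r add0r subr0 scale1r hx2 lee_fin; lra.
have [->|a_neq1] := eqVneq a 1.
  under eq_fun do rewrite mul1r subrr mul0r addr0.
  by rewrite scale1r subrr scale0r addr0 hx1 lee_fin; lra.
have a01 : 0 < a < 1 by rewrite !lt_neqAle eq_sym a_neq0 a_neq1 a0 a1.
by have := h_convex x1 x2 dx1s dx2s a01; rewrite hx1 hx2 -!EFinM -EFinD.
Qed.

Lemma self_subgrad_pairing x xs :
  is_dual xs -> h x xs = (xs x)%:E -> self_subgrad 0 x xs.
Proof.
move=> dxs hx; split=> //; exists (xs x); split=> // w ws s dws hw.
suff : xs w + ws x - xs x - s <= 0 by lra.
have ws_le_s : ws w <= s by have := h_ge_pairing w dws; rewrite hw lee_fin.
apply: (@le0_of_weighted_le _ _ (s - ws w)); first lra.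
move=> l l01; have /andP [l0 l1] := l01.
have hconv := h_convex w x dws dxs l01.
have := le_trans (h_ge_pairing _ (is_dual_comb l (1 - l) dws dxs)) hconv.
rewrite hx hw -!EFinM -EFinD lee_fin /=.
rewrite (dual_comb _ _ _ _ dws) (dual_comb _ _ _ _ dxs) => le_comb.
suff : l * ((1 - l) * (xs w + ws x - xs x - s) - l * (s - ws w)) <= 0.
  by rewrite pmulr_rle0 //; lra.
lra.
Qed.

Lemma self_subgrad_comb e1 e2 x1 x2 x1s x2s (a : R) :
  self_subgrad e1 x1 x1s -> self_subgrad e2 x2 x2s -> 0 <= a <= 1 ->
  self_subgrad (a * e1 + (1 - a) * e2 + a * (1 - a) * (x1s (x1 - x2) - x2s (x1 - x2)))
    (a *: x1 + (1 - a) *: x2) (fun z => a * x1s z + (1 - a) * x2s z).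
Proof.
move=> [dx1s [r1 [hx1 ineq1]]] [dx2s [r2 [hx2 ineq2]]] a01.
have dzs := is_dual_comb a (1 - a) dx1s dx2s.
have := convex_XXs_le_comb dx1s dx2s hx1 hx2 a01.
have := h_ge_pairing (a *: x1 + (1 - a) *: x2) dzs.
case hz: (h _ _) => [rz| |] //=; rewrite !lee_fin => _ le_rz.
split=> //; exists rz; split=> // w ws s dws hw.
move: a01 => /andP [a0 a1]; have a1' : 0 <= 1 - a by lra.
have := ler_wpM2l a0 (ineq1 w ws s dws hw).
have := ler_wpM2l a1' (ineq2 w ws s dws hw).
rewrite (dual_comb _ _ _ _ dws) (dual_comb _ _ _ _ dx1s) (dual_comb _ _ _ _ dx2s).
rewrite (dualB x1 x2 dx1s) (dualB x1 x2 dx2s); lra.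
Qed.

End SelfSubgradient.

Lemma maximal_monotone_graph_neq0 {R : realType} {X : normedModType R}
  (T : X -> set (X -> R)) :
  maximal_monotone T -> exists x xs, T x xs.
Proof.
move=> [_ [_ maxT]]; apply: contrapT => graph0.
pose S (x : X) : set (X -> R) := [set f | x = 0 /\ f = (fun=> 0)].
have d0 : is_dual (fun _ : X => 0 : R).
  by split; [move=> *; rewrite mulr0 addr0 | exact: cst_continuous].
have ST : S = T.
  apply: maxT => [x f [_ ->] //|x y xs ys [_ ->] [_ ->]|x f Tf].
  - by rewrite subrr.
  - by exfalso; apply: graph0; exists x, f.
by apply: graph0; exists 0, (fun=> 0); rewrite -ST.
Qed.

Theorem proposition3p1 (R : realType) (X : completeNormedModType R)
  (T : X -> set (X -> R)) (h : X -> (X -> R) -> \bar R) :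
  reflexive_space X -> maximal_monotone T -> calH T h ->
  (forall eps x, 0 <= eps -> Tbreve h eps x = Lg (calA h) eps x) /\
  calE T (Tbreve h).
Proof.
move=> _ maxT [_ [h_convex [h_ge hT]]].
have dT := maxT.1.
have [x0 [xs0 Tx0]] := maximal_monotone_graph_neq0 maxT.
have TbE e x xs := Tbreve_self_subgrad h_ge e x xs.
have LgE e x xs := Lg_calA_self_subgrad h_ge e x xs (dT _ _ Tx0) (hT _ _ Tx0).
split.
  by move=> e x _; apply/seteqP; split=> xs; [move/TbE/LgE | move/LgE/TbE].
split; [|split].
- move=> e x e0 xs Txs; apply/TbE; apply: (self_subgrad_le e0).
  exact: self_subgrad_pairing (dT _ _ Txs) (hT _ _ Txs).
- by move=> e1 e2 x _ le_e xs /TbE /(self_subgrad_le le_e) /TbE.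
- move=> e1 e2 x1 x2 x1s x2s a _ _ /TbE sub1 /TbE sub2 a01 /=.
  have sub := self_subgrad_comb h_ge h_convex sub1 sub2 a01.
  by split; [exact: self_subgrad_ge0 sub | exact/TbE].
Qed.
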